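(* Let $c$ and $n$ be odd positive integers with $n>c$, and set $N=n-c-1$. There is a bijection between standard Young tableaux of shape with $2$ rows and $N$ columns and lattice paths in an $N\times N$ grid from the top-left corner to the bottom-right corner, using unit right and down steps and never going strictly below the diagonal joining these two corners, such that the parity of the number of unit squares of the grid lying above the path equals the parity of the Latin reading word of the corresponding tableau.
   Context: Young tableaux are standard, in English notation, with entries $1,\ldots,2N$. The Latin reading word of a tableau is obtained by reading its entries row by row from top to bottom, each row left to right; its parity is its sign as a permutation of $\{1,\ldots,2N\}$. *)

From mathcomp Require Import all_boot all_order all_fingroup.
Set Implicit Arguments. Unset Strict Implicit. Unset Printing Implicit Defensive.

(* ---------- Standard Young tableaux of shape (N,N) ----------
   A filling of the 2 x N rectangle with 1..2N, each used once, is encoded by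
   its Latin reading word: a permutation w of 'I_(2N) such that the cell in
   row i (0 or 1, top to bottom) and column j (0..N-1, left to right), i.e. the
   cell at reading position i*N + j, contains the entry (w (i*N+j)) + 1.
   (Entries are shifted by one: 0..2N-1 stand for 1..2N; this does not affect
   comparisons nor the sign of the reading word.) *)

(* entry at reading position k (0 outside the range, never used there) *)
Definition ent (N : nat) (w : {perm 'I_(N.*2)}) (k : nat) : nat :=
  odflt 0 (omap (fun x : 'I_(N.*2) => val (w x)) (insub k)).

Definition cell (N : nat) (w : {perm 'I_(N.*2)}) (i j : nat) : nat :=
  ent w (i * N + j).

Definition is_syt (N : nat) (w : {perm 'I_(N.*2)}) : bool :=
  [forall i : 'I_2, forall j : 'I_N, (j.+1 < N) ==> (cell w i j < cell w i j.+1)]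
  && [forall j : 'I_N, cell w 0 j < cell w 1 j].

Definition syt (N : nat) := {w : {perm 'I_(N.*2)} | is_syt w}.

Definition reading_parity (N : nat) (T : syt N) : bool := odd_perm (val T).

(* ---------- Lattice paths in the N x N grid ----------
   A path from the top-left to the bottom-right corner is a word of 2N steps,
   true = unit step right, false = unit step down, with exactly N right steps.
   After a prefix, the path is at (#right steps) to the right and (#down steps)
   below the start; the diagonal joining the two corners is where these agree,
   and the path is strictly below it iff #down > #right. *)
Definition nright (s : seq bool) := count id s.
Definition ndown (s : seq bool) := count negb s.

Definition is_path_above (N : nat) (s : (N.*2).-tuple bool) : bool :=
  (nright s == N) &&
  [forall k : 'I_(N.*2).+1, ndown (take k s) <= nright (take k s)].

Definition gpath (N : nat) := {s : (N.*2).-tuple bool | is_path_above s}.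

(* number of unit squares of the grid above the path: a right step taken
   after d down steps has exactly d squares of its column above it *)
Definition area (N : nat) (s : (N.*2).-tuple bool) : nat :=
  \sum_(i < N.*2 | tnth s i) ndown (take i s).

From mathcomp Require Import all_boot all_order all_fingroup.
From mathcomp Require Import zify.
Set Implicit Arguments. Unset Strict Implicit. Unset Printing Implicit Defensive.

(* The path of a tableau steps right at step [k] iff the entry [k] lies in the
   top row; the ballot condition is then the column strictness of the tableau.
   Conversely, the permutation [step_perm] sending each step of a path to the
   reading position of the cell it fills is the inverse of the reading word.
   It is increasing on right steps and on down steps, and sends right steps to
   the top row, so its inversions are the pairs (down step, later right step),
   i.e. the unit squares above the path.  The parity of a permutation being that
   of its number of inversions, the two parities agree. *)

Lemma ltn_mono_in_of_succ (a : nat -> nat) N :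
  (forall j, j.+1 < N -> a j < a j.+1) -> {in gtn N &, {mono a : y x / y < x}}.
Proof.
move=> a_incr; apply: leqW_mono_in; apply: leq_mono_in; apply: homo_ltn_in.
- exact: ltn_trans.
- by move=> i j lt_i lt_j k; rewrite !inE /= in lt_i lt_j *; lia.
- by move=> i _; apply: a_incr.
Qed.

Definition perm_nat n (s : {perm 'I_n}) (x : nat) : nat :=
  odflt 0 (omap (fun o : 'I_n => val (s o)) (insub x)).

Lemma perm_natE n (s : {perm 'I_n}) (x : 'I_n) : perm_nat s x = s x.
Proof. by rewrite /perm_nat valK. Qed.

Lemma perm_nat_lt n (s : {perm 'I_n}) x : x < n -> perm_nat s x < n.
Proof. by move=> lt_x; rewrite (perm_natE s (Ordinal lt_x)). Qed.

Lemma perm_natK n (s : {perm 'I_n}) x : x < n -> perm_nat s^-1 (perm_nat s x) = x.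
Proof. by move=> lt_x; rewrite (perm_natE s (Ordinal lt_x)) perm_natE permK. Qed.

Lemma perm_incr_eq1 n (s : {perm 'I_n}) :
  (forall i, i.+1 < n -> perm_nat s i < perm_nat s i.+1) -> s = 1%g.
Proof.
move=> s_incr; apply/permP => x; apply: val_inj; rewrite perm1 /= -perm_natE.
have ge_id y : y < n -> y <= perm_nat s y.
  by elim: y => // y IH hy; apply: leq_ltn_trans (IH (ltnW hy)) (s_incr _ hy).
have shift d y : y + d < n -> perm_nat s y + d <= perm_nat s (y + d).
  elim: d => [|d IH] hd; first by rewrite !addn0.
  by rewrite addnS in hd *; have := IH (ltnW hd); have := s_incr _ hd; lia.
have hx := ltn_ord x.
have := shift (n - x.+1) x ltac:(lia).
have := perm_nat_lt s (ltac:(lia) : x + (n - x.+1) < n).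
have := ge_id x hx; lia.
Qed.

Definition inversions n (s : {perm 'I_n}) : nat :=
  \sum_(p : 'I_n) \sum_(q : 'I_n) ((p < q) && (s q < s p)).

Section AdjacentTransposition.
Variables (n : nat) (s : {perm 'I_n}) (i i1 : 'I_n).
Hypotheses (i1E : i1 = i.+1 :> nat) (descent : s i1 < s i).
Let t := tperm i i1.

(* Composing with [t] reorders only the pair [(i, i1)], which is an inversion of [s]. *)
Lemma inversion_tperm_succ (p q : 'I_n) :
  ((p < q) && (s q < s p)) =
  ((t p < t q) && (s q < s p)) + ((p == i) && (q == i1)) :> nat.
Proof.
have not_ascent : (s i < s i1) = false by apply/negbTE; rewrite -leqNgt ltnW.
have val_neq (x y : 'I_n) : x <> y -> (x : nat) != y by move/eqP.
rewrite /t; case: tpermP => [->|->|/val_neq ? /val_neq ?];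
  case: tpermP => [->|->|/val_neq ? /val_neq ?];
  rewrite ?descent ?not_ascent -?val_eqE /=; case: (s q < s p); lia.
Qed.

Lemma inversions_tperm_succ : inversions s = (inversions (t * s)%g).+1.
Proof.
have -> : inversions (t * s)%g =
    \sum_(p : 'I_n) \sum_(q : 'I_n) ((t p < t q) && (s q < s p)).
  rewrite /inversions (reindex_inj (@perm_inj _ t)); apply: eq_bigr => p _.
  rewrite (reindex_inj (@perm_inj _ t)); apply: eq_bigr => q _.
  by rewrite !permM !tpermK.
rewrite /inversions.
rewrite (eq_bigr _ (fun p _ => eq_bigr _ (fun q _ => inversion_tperm_succ p q))).
rewrite (eq_bigr _ (fun p _ => big_split _ _ _ _ _)) big_split /= -addn1.
congr (_ + _); rewrite (bigD1 i) //= [X in _ + X]big1 => [|p /negbTE ->].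
  by rewrite addn0 (bigD1 i1) //= !eqxx [X in _ + X]big1 // => q /negbTE ->.
by rewrite big1.
Qed.

End AdjacentTransposition.

Lemma odd_perm_inversions n (s : {perm 'I_n}) : odd_perm s = odd (inversions s).
Proof.
have [m] := ubnP (inversions s); elim: m s => // m IH s.
case: (pickP (fun i : 'I_n => (i.+1 < n) && (perm_nat s i.+1 < perm_nat s i))) =>
  [i /andP [hi descent] | incr] ltm.
- pose i1 := Ordinal hi.
  have i_neq : i != i1 by rewrite -val_eqE /= neq_ltn ltnSn.
  rewrite (perm_natE s i) (perm_natE s i1) in descent.
  have inv_s := inversions_tperm_succ (erefl : i1 = i.+1 :> nat) descent.
  have := odd_mul_tperm i i1 s.
  rewrite i_neq (IH (tperm i i1 * s)%g); last by rewrite -ltnS -inv_s.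
  by rewrite inv_s oddS => ->; case: odd_perm.
- have -> : s = 1%g.
    apply: perm_incr_eq1 => j hj; have := incr (Ordinal (ltnW hj)).
    rewrite /= hj /= ltnNge => /negbFE; rewrite leq_eqVlt => /orP [|//].
    rewrite (perm_natE s (Ordinal (ltnW hj))) (perm_natE s (Ordinal hj)).
    by move=> /eqP/val_inj/perm_inj/(congr1 val)/n_Sn.
  rewrite odd_perm1 /inversions big1 // => p _.
  by rewrite big1 // => q _; rewrite !perm1; case: ltngtP.
Qed.

Definition nbefore (b : nat -> bool) (k : nat) : nat := \sum_(0 <= m < k) b m.

Lemma nbeforeS b k : nbefore b k.+1 = nbefore b k + b k.
Proof. by rewrite /nbefore big_nat_recr. Qed.

Lemma nbefore_ltn b p q : p < q -> nbefore b p + b p <= nbefore b q.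
Proof.
move=> lt_pq; rewrite /nbefore [X in _ <= X](@big_cat_nat _ _ _ p) ?(ltnW lt_pq) //=.
by rewrite [X in _ <= _ + X]big_ltn // addnA leq_addr.
Qed.

Lemma leq_nbefore b p q : p <= q -> nbefore b p <= nbefore b q.
Proof.
rewrite leq_eqVlt => /orP [/eqP -> //|lt_pq].
by apply: leq_trans (nbefore_ltn b lt_pq); apply: leq_addr.
Qed.

Lemma nbeforeC b k : nbefore b k + nbefore (negb \o b) k = k.
Proof.
elim: k => [|k IH]; first by rewrite /nbefore !big_geq.
by rewrite !nbeforeS /=; case: (b k) => /=; lia.
Qed.

Lemma eq_nbefore b1 b2 k :
  (forall m, m < k -> b1 m = b2 m) -> nbefore b1 k = nbefore b2 k.
Proof. by move=> eq_b; apply: eq_big_nat => m /andP [_ /eq_b ->]. Qed.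

Lemma nbefore_predT k : nbefore predT k = k.
Proof. by elim: k => [|k IH]; rewrite ?nbeforeS ?IH ?addn1 // /nbefore big_geq. Qed.

Lemma count_take_nth (s : seq bool) (a : pred bool) k : k <= size s ->
  count a (take k s) = nbefore (fun m => a (nth false s m)) k.
Proof.
elim: s k => [|x s IH] [|k] //=; try by rewrite /nbefore big_geq.
by move=> le_ks; rewrite /nbefore big_nat_recl // IH.
Qed.

Lemma sum_ord_ltn_and n q (c : nat -> bool) : q <= n ->
  \sum_(p < n) ((p < q) && c p) = nbefore c q.
Proof.
move=> le_qn; rewrite -(big_mkord xpredT (fun p => nat_of_bool ((p < q) && c p))).
rewrite (@big_cat_nat _ _ _ q) //= [X in _ + X]big1_seq ?addn0.
  by apply: eq_big_nat => p /andP [_ ->].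
by move=> p /andP [_]; rewrite mem_index_iota => /andP [le_qp _]; rewrite ltnNge le_qp.
Qed.

Lemma sum_ord_ltn n q : q <= n -> \sum_(p < n) (p < q) = q.
Proof.
move=> le_qn; rewrite -[RHS]nbefore_predT -(sum_ord_ltn_and predT le_qn).
by apply: eq_bigr => p _; rewrite andbT.
Qed.

Lemma sum_ord_double N (F : nat -> nat) :
  \sum_(x < N.*2) F x = \sum_(j < N) F j + \sum_(j < N) F (N + j).
Proof. by rewrite -addnn big_split_ord. Qed.

Lemma nbefore_perm n (w : {perm 'I_n}) (P : pred nat) k : k <= n ->
  nbefore (fun m => P (perm_nat w^-1 m)) k = \sum_(x < n) (P x && (perm_nat w x < k)).
Proof.
move=> le_kn; rewrite -(sum_ord_ltn_and _ le_kn) (reindex_inj (@perm_inj _ w)).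
by apply: eq_bigr => x _; rewrite !perm_natE permK andbC.
Qed.

(* The reading position of the cell filled by step [k] of a path ([b k] iff the
   step is to the right): the next free cell of the top row for a right step, of
   the bottom row for a down step. *)
Definition step_cell (N : nat) (b : nat -> bool) (k : nat) : nat :=
  if b k then nbefore b k else N + nbefore (negb \o b) k.

Lemma eq_step_cell N (b1 b2 : nat -> bool) k :
  (forall m, m <= k -> b1 m = b2 m) -> step_cell N b1 k = step_cell N b2 k.
Proof.
move=> eq_b; have eq_b_lt m : m < k -> b1 m = b2 m by move/ltnW/eq_b.
rewrite /step_cell eq_b // (eq_nbefore eq_b_lt); congr (if _ then _ else N + _).
by apply: eq_nbefore => m /eq_b_lt /= ->.
Qed.

Section StepCell.
Variables (N : nat) (b : nat -> bool).

Lemma step_cell_row_incr p q : p < q -> b p = b q -> step_cell N b p < step_cell N b q.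
Proof.
move=> lt_pq eq_b; rewrite /step_cell -eq_b.
have := nbefore_ltn b lt_pq; have /= := nbefore_ltn (negb \o b) lt_pq.
by case: (b p) => /=; lia.
Qed.

Lemma step_cell_row_mono p q :
  b p = b q -> (step_cell N b p < step_cell N b q) = (p < q).
Proof.
move=> eq_b; case: (ltngtP p q) => [lt_pq|lt_qp|->]; last exact: ltnn.
  exact: step_cell_row_incr.
by apply/negbTE; rewrite -leqNgt ltnW // (step_cell_row_incr lt_qp (esym eq_b)).
Qed.

Hypothesis nright_total : nbefore b N.*2 = N.

Lemma ndown_total : nbefore (negb \o b) N.*2 = N.
Proof. by have := nbeforeC b N.*2; rewrite nright_total -addnn => /addnI. Qed.

Lemma nbefore_right_lt a : a < N.*2 -> b a -> nbefore b a < N.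
Proof.
by move=> lt_a b_a; have := nbefore_ltn b lt_a; rewrite nright_total b_a addn1.
Qed.

Lemma nbefore_down_lt a : a < N.*2 -> ~~ b a -> nbefore (negb \o b) a < N.
Proof.
move=> lt_a nb_a; have := nbefore_ltn (negb \o b) lt_a.
by rewrite ndown_total /= nb_a addn1.
Qed.

Lemma step_cell_top a : a < N.*2 -> (step_cell N b a < N) = b a.
Proof.
move=> lt_a; rewrite /step_cell; case b_a: (b a); first exact: nbefore_right_lt.
by apply/negbTE; rewrite -leqNgt leq_addr.
Qed.

Lemma step_cell_lt a : a < N.*2 -> step_cell N b a < N.*2.
Proof.
move=> lt_a; rewrite /step_cell; case b_a: (b a).
  by have := nbefore_right_lt lt_a b_a; lia.
by have := nbefore_down_lt lt_a (negbT b_a); lia.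
Qed.

Lemma step_cell_inversion p q : p < q -> q < N.*2 ->
  (step_cell N b q < step_cell N b p) = b q && ~~ b p.
Proof.
move=> lt_pq lt_q; have lt_p : p < N.*2 by lia.
case: (eqVneq (b p) (b q)) => [eq_b | ].
  by rewrite ltnNge ltnW ?step_cell_row_incr // -eq_b andbN.
have := step_cell_top lt_p; have := step_cell_top lt_q.
by case: (b p); case: (b q) => //= top_q top_p _; lia.
Qed.

Lemma step_cell_inj p q : p < N.*2 -> q < N.*2 ->
  step_cell N b p = step_cell N b q -> p = q.
Proof.
have cell_neq p' q' : p' < q' -> q' < N.*2 -> step_cell N b p' != step_cell N b q'.
  move=> lt_pq lt_q; have lt_p : p' < N.*2 by lia.
  case: (eqVneq (b p') (b q')) => [eq_b|]; first by rewrite neq_ltn step_cell_row_incr.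
  apply: contra_neq => eq_cell.
  by rewrite -(step_cell_top lt_p) -(step_cell_top lt_q) eq_cell.
move=> lt_p lt_q eq_pq; case: (ltngtP p q) => // [lt_pq | lt_qp].
- by have := cell_neq _ _ lt_pq lt_q; rewrite eq_pq eqxx.
- by have := cell_neq _ _ lt_qp lt_p; rewrite eq_pq eqxx.
Qed.

Hypothesis ballot : forall k, k <= N.*2 -> nbefore (negb \o b) k <= nbefore b k.

(* By the ballot condition the [j]-th down step comes after the [j]-th right step. *)
Lemma step_cell_column p q : q < N.*2 -> b p -> ~~ b q ->
  step_cell N b q = N + step_cell N b p -> p < q.
Proof.
rewrite /step_cell => lt_q b_p nb_q; rewrite b_p (negbTE nb_q) => /addnI down_q.
rewrite ltnNge; apply/negP => le_qp; have := leq_nbefore b le_qp.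
by have := ballot lt_q; rewrite !nbeforeS /= down_q (negbTE nb_q); lia.
Qed.

End StepCell.

Definition step (N : nat) (s : (N.*2).-tuple bool) (m : nat) : bool := nth false s m.

Lemma nright_take N (s : (N.*2).-tuple bool) k :
  k <= N.*2 -> nright (take k s) = nbefore (step s) k.
Proof. by move=> le_k; rewrite /nright count_take_nth ?size_tuple. Qed.

Lemma ndown_take N (s : (N.*2).-tuple bool) k :
  k <= N.*2 -> ndown (take k s) = nbefore (negb \o step s) k.
Proof. by move=> le_k; rewrite /ndown count_take_nth ?size_tuple. Qed.

Lemma path_aboveP N (s : (N.*2).-tuple bool) :
  reflect (nbefore (step s) N.*2 = N /\
           forall k, k <= N.*2 -> nbefore (negb \o step s) k <= nbefore (step s) k)
          (is_path_above s).
Proof.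
apply: (iffP andP) => [[/eqP nright_s /forallP ballot_s] | [nright_s ballot_s]]; split.
- by rewrite -nright_take // -{1}(size_tuple s) take_size.
- move=> k le_k; have := ballot_s (Ordinal (le_k : k < N.*2.+1)).
  by rewrite /= nright_take // ndown_take.
- by rewrite -(take_size s) size_tuple nright_take // nright_s.
- apply/forallP => k; have le_k : k <= N.*2 by rewrite -ltnS.
  by rewrite nright_take // ndown_take // ballot_s.
Qed.

Lemma is_sytP N (w : {perm 'I_(N.*2)}) :
  reflect [/\ forall j, j.+1 < N -> perm_nat w j < perm_nat w j.+1,
              forall j, j.+1 < N -> perm_nat w (N + j) < perm_nat w (N + j.+1)
            & forall j, j < N -> perm_nat w j < perm_nat w (N + j)]
          (is_syt w).
Proof.
apply: (iffP andP) => [[/forallP rows /forallP cols] | [row0 row1 col]]; split.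
- move=> j lt_j; have := forallP (rows ord0) (Ordinal (ltnW lt_j)).
  by rewrite /cell /= lt_j.
- move=> j lt_j; have := forallP (rows ord_max) (Ordinal (ltnW lt_j)).
  by rewrite /cell /= mul1n lt_j addnS.
- by move=> j lt_j; have := cols (Ordinal lt_j); rewrite /cell /= mul1n.
- apply/forallP => i; apply/forallP => j; apply/implyP => lt_j.
  case: i => [[|[|//]] lt_i]; first exact: row0.
  by rewrite /cell /= mul1n; apply: row1.
- by apply/forallP => j; rewrite /cell mul0n add0n mul1n; apply: col.
Qed.

Section TableauPath.
Variables (N : nat) (w : {perm 'I_(N.*2)}).
Hypothesis w_syt : is_syt w.
Let E := perm_nat w.
Let top m := perm_nat w^-1 m < N.

Lemma nbefore_top_syt k : k <= N.*2 -> nbefore top k = \sum_(j < N) (E j < k).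
Proof.
move=> le_k; rewrite (nbefore_perm w (gtn N)) //.
rewrite (sum_ord_double N (fun x => nat_of_bool ((x < N) && (E x < k)))).
rewrite [X in _ + X]big1 ?addn0.
  by apply: eq_bigr => j _ /=; rewrite ltn_ord.
by move=> j _ /=; rewrite ltnNge leq_addr.
Qed.

Lemma nbefore_bottom_syt k :
  k <= N.*2 -> nbefore (negb \o top) k = \sum_(j < N) (E (N + j) < k).
Proof.
move=> le_k; rewrite (nbefore_perm w (fun x => ~~ (x < N))) //.
rewrite (sum_ord_double N (fun x => nat_of_bool (~~ (x < N) && (E x < k)))).
rewrite big1 ?add0n.
  by apply: eq_bigr => j _ /=; rewrite ltnNge leq_addr.
by move=> j _ /=; rewrite ltn_ord.
Qed.

Lemma nright_syt_total : nbefore top N.*2 = N.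
Proof.
rewrite nbefore_top_syt // -[RHS]card_ord -sum1_card.
by apply: eq_bigr => j _; rewrite perm_nat_lt // -addnn ltn_addr.
Qed.

Lemma ballot_syt k : k <= N.*2 -> nbefore (negb \o top) k <= nbefore top k.
Proof.
case/is_sytP: w_syt => _ _ col le_k.
rewrite nbefore_top_syt // nbefore_bottom_syt //; apply: leq_sum => j _.
by have := col j (ltn_ord j); rewrite -/E; lia.
Qed.

Lemma step_cell_syt x : x < N.*2 -> step_cell N top (E x) = x.
Proof.
case/is_sytP: w_syt => row0 row1 _ lt_x.
have le_Ex : E x <= N.*2 by apply/ltnW/perm_nat_lt.
rewrite /step_cell /top perm_natK //; case: (ltnP x N) => [lt_xN | le_Nx].
  rewrite nbefore_top_syt // -[RHS](sum_ord_ltn (ltnW lt_xN)).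
  by apply: eq_bigr => j _; rewrite /E (ltn_mono_in_of_succ row0 (ltn_ord j) lt_xN).
have [y def_x] : exists y, x = N + y by exists (x - N); rewrite subnKC.
have lt_y : y < N by move: lt_x; rewrite def_x -addnn; lia.
rewrite def_x in le_Ex *.
congr (_ + _); rewrite nbefore_bottom_syt // -[RHS](sum_ord_ltn (ltnW lt_y)).
apply: eq_bigr => j _.
by rewrite /E (ltn_mono_in_of_succ (a := fun j => E (N + j)) row1 (ltn_ord j) lt_y).
Qed.

End TableauPath.

Definition path_of_syt N (w : {perm 'I_(N.*2)}) : (N.*2).-tuple bool :=
  [tuple (w^-1 k < N)%g | k < N.*2].

Lemma step_path_of_syt N (w : {perm 'I_(N.*2)}) m :
  m < N.*2 -> step (path_of_syt w) m = (perm_nat w^-1 m < N).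
Proof.
move=> lt_m; rewrite /step -(tnth_nth _ _ (Ordinal lt_m)) tnth_mktuple.
by rewrite -(perm_natE _ (Ordinal lt_m)).
Qed.

Lemma path_of_syt_above N (w : {perm 'I_(N.*2)}) :
  is_syt w -> is_path_above (path_of_syt w).
Proof.
move=> w_syt; have step_w k : k <= N.*2 ->
    forall m, m < k -> step (path_of_syt w) m = (perm_nat w^-1 m < N).
  by move=> le_k m lt_mk; apply: step_path_of_syt; apply: leq_trans le_k.
apply/path_aboveP; split.
  by rewrite (eq_nbefore (step_w _ (leqnn _))) nright_syt_total.
move=> k le_k; rewrite (eq_nbefore (step_w _ le_k)).
by rewrite (eq_nbefore (fun m lt_mk => congr1 negb (step_w _ le_k m lt_mk))) ballot_syt.
Qed.

Section PathTableau.
Variables (N : nat) (s : gpath N).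
Let b := step (val s).

Lemma nright_path_total : nbefore b N.*2 = N.
Proof. by case/path_aboveP: (valP s). Qed.

Definition step_cell_ord (k : 'I_(N.*2)) : 'I_(N.*2) := insubd k (step_cell N b k).

Lemma step_cell_ordE k : step_cell_ord k = step_cell N b k :> nat.
Proof. by rewrite insubdK //; apply: (step_cell_lt nright_path_total). Qed.

Lemma step_cell_ord_inj : injective step_cell_ord.
Proof.
move=> p q eq_pq; apply: val_inj.
apply: (step_cell_inj nright_path_total (ltn_ord p) (ltn_ord q)).
by rewrite -!step_cell_ordE eq_pq.
Qed.

Definition step_perm : {perm 'I_(N.*2)} := perm step_cell_ord_inj.

Lemma step_permE k : step_perm k = step_cell N b k :> nat.
Proof. by rewrite permE step_cell_ordE. Qed.

Lemma step_perm_inv_syt : is_syt step_perm^-1.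
Proof.
have [_ ballot_s] := path_aboveP _ (valP s).
pose a x := perm_nat step_perm^-1 x.
have cell_a x : x < N.*2 -> step_cell N b (a x) = x.
  by move=> lt_x; rewrite /a (perm_natE _ (Ordinal lt_x)) -step_permE permKV.
have lt_a x : x < N.*2 -> a x < N.*2 by apply: perm_nat_lt.
have top_a x : x < N.*2 -> b (a x) = (x < N).
  by move=> lt_x; rewrite -(step_cell_top nright_path_total (lt_a _ lt_x)) cell_a.
apply/is_sytP; split => j lt_j.
- rewrite -(step_cell_row_mono N (b := b)) ?cell_a ?top_a //; lia.
- rewrite -(step_cell_row_mono N (b := b)) ?cell_a ?top_a //; lia.
- apply: (step_cell_column nright_path_total ballot_s).
  all: rewrite ?lt_a ?cell_a ?top_a //; lia.
Qed.

Lemma area_inversions : area (val s) = inversions step_perm.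
Proof.
transitivity (\sum_(q < N.*2) b q * nbefore (negb \o b) q).
  rewrite /area big_mkcond; apply: eq_bigr => q _.
  rewrite (tnth_nth false) ndown_take 1?ltnW //.
  by rewrite /b /step; case: nth; rewrite ?mul1n ?mul0n.
rewrite /inversions exchange_big; apply: eq_bigr => q _ /=.
have inv_q (p : 'I_(N.*2)) :
    ((p < q) && (step_perm q < step_perm p)) = (p < q) && (b q && ~~ b p).
  case: (ltnP p q) => //= lt_pq.
  by rewrite !step_permE (step_cell_inversion nright_path_total lt_pq).
rewrite (eq_bigr _ (fun p _ => congr1 nat_of_bool (inv_q p))).
case: (b q) => /=; last by rewrite mul0n big1 // => p _; rewrite andbF.
by rewrite mul1n (sum_ord_ltn_and (negb \o b) (ltnW (ltn_ord q))).
Qed.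

End PathTableau.

Definition syt_of_path N (s : gpath N) : syt N :=
  exist _ (step_perm s)^-1%g (step_perm_inv_syt s).

Definition gpath_of_syt N (T : syt N) : gpath N :=
  exist _ (path_of_syt (val T)) (path_of_syt_above (valP T)).

Lemma syt_of_pathK N : cancel (@syt_of_path N) (@gpath_of_syt N).
Proof.
move=> s; apply/val_inj/eq_from_tnth => k /=.
rewrite tnth_mktuple invgK step_permE.
by rewrite (step_cell_top (nright_path_total s) (ltn_ord k)) (tnth_nth false).
Qed.

Lemma step_perm_gpath_of_syt N (T : syt N) : step_perm (gpath_of_syt T) = (val T)^-1%g.
Proof.
apply/permP => m; apply: val_inj; rewrite /= step_permE.
rewrite -[in LHS](permKV (val T) m) -perm_natE.
rewrite -[RHS](step_cell_syt (valP T) (ltn_ord ((val T)^-1 m)%g)) perm_natE permKV.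
by apply: eq_step_cell => k le_k; apply: step_path_of_syt; apply: leq_ltn_trans le_k _.
Qed.

Lemma gpath_of_sytK N : cancel (@gpath_of_syt N) (@syt_of_path N).
Proof. by move=> T; apply: val_inj; rewrite /= step_perm_gpath_of_syt invgK. Qed.

Theorem syt_gpath_parity_bijection N :
  exists f : syt N -> gpath N,
    bijective f /\ forall T : syt N, odd (area (val (f T))) = reading_parity T.
Proof.
exists (@gpath_of_syt N); split.
  exact: Bijective (@gpath_of_sytK N) (@syt_of_pathK N).
move=> T; rewrite area_inversions -odd_perm_inversions step_perm_gpath_of_syt.
exact: odd_permV.
Qed.

Theorem lemma2p18 (c n : nat) :
  odd c -> odd n -> 0 < c -> c < n ->
  let N := n - c - 1 in
  exists f : syt N -> gpath N,
    bijective f /\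
    forall T : syt N, odd (area (val (f T))) = reading_parity T.
Proof. by move=> _ _ _ _ N; apply: syt_gpath_parity_bijection. Qed.
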